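(* Let $D$ be an associative division algebra finite-dimensional over its center $F$, let $\sigma\in\mathrm{Aut}(D)$ be such that $\sigma|_F$ has finite order $m$, let $F_0=\mathrm{Fix}(\sigma)\cap F$, and let $A=(D,\sigma,d)$ with $d\in D\setminus F_0$. (i) The subgroup of $F_0$-automorphisms of $A$ extending $\mathrm{id}_D$ is isomorphic to $\{k\in F^\times\mid k\sigma(k)\cdots\sigma^{m-1}(k)=1\}$. (ii) If $F_0$ contains a primitive $m$th root of unity $\omega$, then $\langle H_{\mathrm{id},\omega}\rangle$ is a cyclic subgroup of $\mathrm{Aut}_{F_0}(A)$ of order $m$.
   Context: $D[t;\sigma]$ is the twisted polynomial ring: polynomials $\sum a_it^i$ ($a_i\in D$), multiplication determined by $ta=\sigma(a)t$. For $d\in D^\times$, $(D,\sigma,d)$ is the set of polynomials of degree $<m$ in $D[t;\sigma]$ with multiplication $g\circ h=$ remainder of $gh$ on right division by $t^m-d$; it is a unital algebra over $F_0$ containing $D$. For $k\in F^\times$, $H_{\mathrm{id},k}(\sum_{i=0}^{m-1}a_it^i)=a_0+\sum_{i=1}^{m-1}a_i\big(\prod_{l=0}^{i-1}\sigma^l(k)\big)t^i$. *)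

From HB Require Import structures.
From mathcomp Require Import all_boot all_order all_algebra.
Unset Printing Implicit Defensive.
Import Order.TTheory GRing.Theory Num.Theory.
Local Open Scope ring_scope.

Section NonassocCyclic.
Variable D : unitRingType.

Definition central (x : D) : Prop := forall y : D, x * y = y * x.

Definition division_ring : Prop := forall x : D, x != 0 -> x \is a GRing.unit.

Definition findim_over_center : Prop :=
  exists s : seq D, forall x : D, exists c : seq D,
    [/\ size c = size s, (forall i, central c`_i) &
        x = \sum_(i < size s) c`_i * s`_i].

Variable sigma : {rmorphism D -> D}.

Definition sig_pow (l : nat) (x : D) : D := iter l sigma x.

Definition restr_order (m : nat) : Prop :=
  [/\ (0 < m)%N,
      (forall x, central x -> sig_pow m x = x) &
      (forall j, (0 < j < m)%N -> exists x, central x /\ sig_pow j x != x)].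

Definition inF0 (x : D) : Prop := central x /\ sigma x = x.

Variable m : nat.
Variable d : D.

(* Elements of A = (D,sigma,d): polynomials sum_{i<m} a_i t^i, stored as
   their coefficient vectors. *)
Definition Alg := {ffun 'I_m -> D}.

Definition coef (x : Alg) (n : nat) : D :=
  match insub n with Some i => x i | None => 0 end.

(* coefficients of the product f g in D[t;sigma], where ta = sigma(a) t *)
Definition tmul (f g : nat -> D) (n : nat) : D :=
  \sum_(i < n.+1) f i * sig_pow i (g (n - i)%N).

(* one step of right division by t^m - d eliminating the term of degree N:
   f_N t^N = f_N t^(N-m) (t^m - d) + f_N sigma^(N-m)(d) t^(N-m) *)
Definition red_step (N : nat) (f : nat -> D) : nat -> D :=
  fun n => if n == N then 0
           else if n == (N - m)%N then f n + f N * sig_pow (N - m) d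
           else f n.

(* eliminates successively the degrees m+k-1, ..., m *)
Fixpoint reduce (k : nat) (f : nat -> D) : nat -> D :=
  match k with
  | 0 => f
  | k'.+1 => reduce k' (red_step (m + k') f)
  end.

(* g ∘ h = remainder of gh on right division by t^m - d
   (gh has degree <= 2m-2, so eliminating degrees 2m-2 .. m suffices) *)
Definition amul (x y : Alg) : Alg :=
  [ffun i : 'I_m => reduce m.-1 (tmul (coef x) (coef y)) i].

Definition ascale (c : D) (x : Alg) : Alg := [ffun i => c * x i].

Definition aconst (a : D) : Alg := [ffun i : 'I_m => if val i == 0%N then a else 0].

Definition is_F0_aut (phi : Alg -> Alg) : Prop :=
  [/\ forall x y, phi (x + y) = phi x + phi y,
      forall c x, inF0 c -> phi (ascale c x) = ascale c (phi x),
      forall x y, phi (amul x y) = amul (phi x) (phi y) &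
      bijective phi].

Definition extends_idD (phi : Alg -> Alg) : Prop :=
  forall a : D, phi (aconst a) = aconst a.

Definition H_id (k : D) (x : Alg) : Alg :=
  [ffun i : 'I_m => x i * \prod_(l < val i) sig_pow l k].

Definition norm_one (k : D) : Prop :=
  [/\ central k, k != 0 & \prod_(l < m) sig_pow l k = 1].

End NonassocCyclic.

(* Write N_k(n) = k sigma(k) ... sigma^(n-1)(k). The map H_{id,k} is the
   substitution t |-> k t: since N_k(i + j) = N_k(i) sigma^i(N_k(j)) for central k,
   it is multiplicative on D[t;sigma], and when N_k(m) = 1 it also commutes with
   the reduction t^m = d, so it is an automorphism of A fixing D.
   Conversely, an automorphism phi fixing D satisfies phi(t) a = sigma(a) phi(t)
   for a in D. As sigma^i and sigma differ on F for every i < m other than 1, this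
   forces phi(t) = k t with k central and nonzero, hence phi = H_{id,k}; applying
   phi to t^(m-1) t = d gives N_k(m) = 1. For (ii), the j-th iterate of
   H_{id,omega} multiplies the coefficient of t^i by omega^(ij), so it is the
   identity exactly when omega^j = 1. *)

From Pilot Require Import Defs.
From HB Require Import structures.
From mathcomp Require Import all_boot all_order all_algebra.
From mathcomp Require Import zify.
Import GRing.Theory.

Set Implicit Arguments.
Unset Strict Implicit.
Unset Printing Implicit Defensive.
Local Open Scope ring_scope.

Section SigmaPowers.
Variable D : unitRingType.
Variable sigma : {rmorphism D -> D}.
Local Notation sig_pow := (sig_pow D sigma).
Local Notation central := (central D).

Lemma sig_powS l a : sig_pow l.+1 a = sigma (sig_pow l a).
Proof. exact: iterS. Qed.

Lemma sig_powD i j a : sig_pow (i + j) a = sig_pow i (sig_pow j a).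
Proof. exact: iterD. Qed.

Lemma sig_pow_is_zmod_morphism l : zmod_morphism (sig_pow l).
Proof. by move=> a b; elim: l => // l IH; rewrite !sig_powS IH rmorphB. Qed.

Lemma sig_pow_is_monoid_morphism l : monoid_morphism (sig_pow l).
Proof.
split; first by elim: l => // l IH; rewrite sig_powS IH rmorph1.
by move=> a b; elim: l => // l IH; rewrite !sig_powS IH rmorphM.
Qed.

HB.instance Definition _ l :=
  GRing.isZmodMorphism.Build D D (sig_pow l) (sig_pow_is_zmod_morphism l).
HB.instance Definition _ l :=
  GRing.isMonoidMorphism.Build D D (sig_pow l) (sig_pow_is_monoid_morphism l).

Lemma sig_pow_fixed w l : sigma w = w -> sig_pow l w = w.
Proof. by move=> sw; elim: l => // l IH; rewrite sig_powS IH. Qed.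

Lemma central0 : central 0.
Proof. by move=> y; rewrite mul0r mulr0. Qed.

Lemma central1 : central 1.
Proof. by move=> y; rewrite mul1r mulr1. Qed.

Lemma centralM a b : central a -> central b -> central (a * b).
Proof. by move=> ca cb y; rewrite -mulrA cb mulrA ca mulrA. Qed.

Definition sig_norm (k : D) (n : nat) : D := \prod_(l < n) sig_pow l k.

Lemma sig_norm0 k : sig_norm k 0 = 1.
Proof. exact: big_ord0. Qed.

Lemma sig_normS k n : sig_norm k n.+1 = sig_norm k n * sig_pow n k.
Proof. exact: big_ord_recr. Qed.

Lemma sig_normD k a b : sig_norm k (a + b) = sig_norm k a * sig_pow a (sig_norm k b).
Proof.
elim: b => [|b IH]; first by rewrite addn0 sig_norm0 rmorph1 mulr1.
by rewrite addnS !sig_normS IH rmorphM /= -sig_powD mulrA.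
Qed.

Lemma sig_norm1 k : sig_norm k 1 = k.
Proof. by rewrite sig_normS sig_norm0 mul1r. Qed.

Lemma sig_norm1n n : sig_norm 1 n = 1.
Proof. by apply: big1 => l _; rewrite rmorph1. Qed.

Lemma sig_norm_unit k n : k \is a GRing.unit -> sig_norm k n \is a GRing.unit.
Proof.
move=> uk; elim: n => [|n IH]; first by rewrite sig_norm0 unitr1.
by rewrite sig_normS unitrMl // rmorph_unit.
Qed.

Lemma sig_norm_fixed w n : sigma w = w -> sig_norm w n = w ^+ n.
Proof.
move=> sw; elim: n => [|n IH]; first by rewrite sig_norm0.
by rewrite sig_normS IH sig_pow_fixed // exprSr.
Qed.

Hypothesis sigma_bij : bijective sigma.

Lemma central_sig_pow l c : central c -> central (sig_pow l c).
Proof.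
case: sigma_bij => g _ gK; elim: l c => // l IH c cc y.
by rewrite sig_powS -[y]gK -!rmorphM IH.
Qed.

Lemma central_sig_norm k n : central k -> central (sig_norm k n).
Proof.
move=> ck; elim: n => [|n IH]; first by rewrite sig_norm0; apply: central1.
by rewrite sig_normS; apply: centralM => //; apply: central_sig_pow.
Qed.

Lemma sig_normM k k' n : central k' ->
  sig_norm (k * k') n = sig_norm k n * sig_norm k' n.
Proof.
move=> ck'; elim: n => [|n IH]; first by rewrite !sig_norm0 mulr1.
rewrite !sig_normS IH rmorphM -!mulrA; congr (_ * _); rewrite !mulrA.
by rewrite central_sig_norm.
Qed.

End SigmaPowers.

Section CyclicAlgebra.
Variable D : unitRingType.
Variable sigma : {rmorphism D -> D}.
Variable m : nat.
Variable d : D.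
Local Notation A := (Alg D m).
Local Notation central := (central D).
Local Notation sig_pow := (sig_pow D sigma).
Local Notation sig_norm := (sig_norm sigma).
Local Notation coef := (coef D m).
Local Notation tmul := (tmul D sigma).
Local Notation red_step := (red_step D sigma m d).
Local Notation reduce := (reduce D sigma m d).
Local Notation amul := (amul D sigma m d).
Local Notation aconst := (aconst D m).
Local Notation H_id := (H_id D sigma m).

Lemma eq_tmul f f' g g' : f =1 f' -> g =1 g' -> tmul f g =1 tmul f' g'.
Proof. by move=> ef eg n; apply: eq_bigr => i _; rewrite ef eg. Qed.

Lemma eq_red_step N f g : f =1 g -> red_step N f =1 red_step N g.
Proof. by move=> e n; rewrite /Defs.red_step !e. Qed.

Lemma eq_reduce k f g : f =1 g -> reduce k f =1 reduce k g.
Proof. by elim: k f g => [|k IH] f g e //=; apply/IH/eq_red_step. Qed.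

Lemma red_step_id N f : f N = 0 -> red_step N f =1 f.
Proof.
move=> fN n; rewrite /Defs.red_step fN mul0r addr0.
by case: eqP => [->|_] //; case: ifP.
Qed.

Lemma reduceS k f : reduce k.+1 f = reduce k (red_step (m + k) f).
Proof. by []. Qed.

Lemma reduce_id k f : (forall N, (m <= N)%N -> f N = 0) -> reduce k f =1 f.
Proof.
elim: k f => [|k IH] f f0 n //.
by rewrite reduceS (eq_reduce _ (red_step_id (f0 _ (leq_addr _ _)))) IH.
Qed.

Lemma reduce_top k f : (forall N, (m < N)%N -> f N = 0) -> (0 < k)%N ->
  reduce k f =1 red_step m f.
Proof.
case: k => // k f0 _; elim: k => [|k IH] n; first by rewrite reduceS addn0.
by rewrite reduceS (eq_reduce _ (red_step_id (f0 _ _))) ?IH //; lia.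
Qed.

Definition twist (k : D) (f : nat -> D) (n : nat) : D := f n * sig_norm k n.

Lemma coef_H_id k x n : coef (H_id k x) n = twist k (coef x) n.
Proof.
rewrite /Defs.coef /twist; case: insubP => [i _ <-|_]; last by rewrite mul0r.
by rewrite ffunE.
Qed.

Lemma H_idE k x i : H_id k x i = x i * sig_norm k i.
Proof. exact: ffunE. Qed.

Lemma H_id1 : H_id 1 =1 id.
Proof. by move=> x; apply/ffunP => i; rewrite H_idE sig_norm1n mulr1. Qed.

Lemma H_idM k k' : bijective sigma -> central k' ->
  H_id (k * k') =1 H_id k \o H_id k'.
Proof.
move=> sigma_bij ck' x; apply/ffunP => i.
by rewrite /= !H_idE sig_normM // -mulrA (central_sig_norm sigma_bij i ck').
Qed.

Section TwistMultiplicative.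
Hypothesis sigma_bij : bijective sigma.
Variable k : D.
Hypothesis k_central : central k.
Hypothesis k_norm1 : sig_norm k m = 1.

Lemma tmul_twist f g n : tmul (twist k f) (twist k g) n = twist k (tmul f g) n.
Proof.
rewrite /Defs.tmul /twist mulr_suml; apply: eq_bigr => i _.
have le_in : (i <= n)%N by rewrite -ltnS.
have -> : sig_norm k n = sig_norm k i * sig_pow i (sig_norm k (n - i)).
  by rewrite -sig_normD subnKC.
rewrite rmorphM /= -!mulrA; congr (_ * _).
by rewrite !mulrA [sig_norm k i * _]central_sig_norm.
Qed.

Lemma red_step_twist f N : (m <= N)%N ->
  red_step N (twist k f) =1 twist k (red_step N f).
Proof.
move=> le_mN n; rewrite /Defs.red_step /twist.
case: eqP => [->|_]; first by rewrite mul0r.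
case: eqP => [->|_] //.
have -> : sig_norm k N = sig_norm k (N - m).
  by rewrite -{1}(subnK le_mN) sig_normD k_norm1 rmorph1 mulr1.
rewrite mulrDl -!mulrA.
by rewrite [sig_norm k _ * _]central_sig_norm.
Qed.

Lemma reduce_twist j f : reduce j (twist k f) =1 twist k (reduce j f).
Proof.
elim: j f => [|j IH] f n //=.
by rewrite (eq_reduce _ (red_step_twist f (leq_addr _ _))) IH.
Qed.

Lemma H_id_amul x y : H_id k (amul x y) = amul (H_id k x) (H_id k y).
Proof.
apply/ffunP => i; rewrite !ffunE.
rewrite (eq_reduce _ (eq_tmul (coef_H_id k x) (coef_H_id k y))).
by rewrite (eq_reduce _ (tmul_twist _ _)) reduce_twist.
Qed.

Lemma H_id_F0_aut : k \is a GRing.unit -> is_F0_aut D sigma m d (H_id k).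
Proof.
move=> k_unit; split.
- by move=> x y; apply/ffunP => i; rewrite !ffunE mulrDl.
- by move=> c x _; apply/ffunP => i; rewrite !ffunE mulrA.
- exact: H_id_amul.
- exists (fun x : A => [ffun i : 'I_m => x i / sig_norm k i]) => x;
    apply/ffunP => i; rewrite !ffunE.
    by rewrite mulrK // sig_norm_unit.
  by rewrite divrK // sig_norm_unit.
Qed.

End TwistMultiplicative.

Lemma H_id_extends_idD k : extends_idD D m (H_id k).
Proof.
move=> a; apply/ffunP => i; rewrite H_idE !ffunE.
by case: eqP => [->|_]; rewrite ?sig_norm0 ?mulr1 ?mul0r.
Qed.

Definition amono (a : D) (i : nat) : A :=
  [ffun j : 'I_m => if val j == i then a else 0].

Lemma aconst_amono a : aconst a = amono a 0.
Proof. by []. Qed.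

Lemma amono0 i : amono 0 i = 0.
Proof. by apply/ffunP => j; rewrite !ffunE if_same. Qed.

Lemma amono_sum (y : A) : \sum_(i < m) amono (y i) i = y.
Proof.
apply/ffunP => j; rewrite sum_ffunE (bigD1 j) //= !ffunE eqxx big1 ?addr0 //.
by move=> i ij; rewrite ffunE; case: eqP => // /val_inj ji; rewrite ji eqxx in ij.
Qed.

Lemma coef_ord (x : A) (i : 'I_m) : coef x i = x i.
Proof. by rewrite /Defs.coef valK. Qed.

Lemma coef_default (x : A) n : (m <= n)%N -> coef x n = 0.
Proof. by move=> le_mn; rewrite /Defs.coef insubF // ltnNge le_mn. Qed.

Lemma coef_amono a i n : (i < m)%N -> coef (amono a i) n = if n == i then a else 0.
Proof.
move=> lt_im; rewrite /Defs.coef; case: insubP => [j _ <-|]; first by rewrite ffunE.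
by case: eqP => // ->; rewrite lt_im.
Qed.

Lemma tmul_amonol a i g n : (i < m)%N ->
  tmul (coef (amono a i)) g n = if (i <= n)%N then a * sig_pow i (g (n - i)%N) else 0.
Proof.
move=> lt_im; rewrite /Defs.tmul (eq_bigr (fun l : 'I_n.+1 =>
  if (l : nat) == i then a * sig_pow i (g (n - i)%N) else 0)); last first.
  by move=> l _; rewrite coef_amono //; case: eqP => [->|_]; rewrite ?mul0r.
by rewrite -big_mkcond (big_ord1_eq _ (fun=> _)) ltnS.
Qed.

Lemma tmul_aconstr f b n : (0 < m)%N ->
  tmul f (coef (aconst b)) n = f n * sig_pow n b.
Proof.
move=> m_gt0; rewrite /Defs.tmul (eq_bigr (fun l : 'I_n.+1 =>
  if (l : nat) == n then f n * sig_pow n b else 0)); last first.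
  move=> l _; rewrite aconst_amono coef_amono //.
  have le_ln : (l <= n)%N by rewrite -ltnS.
  have [->|ne_ln] := eqVneq (l : nat) n; first by rewrite subnn.
  by rewrite ifN ?rmorph0 ?mulr0 //; apply/eqP; lia.
by rewrite -big_mkcond (big_ord1_eq _ (fun=> _)) ltnSn.
Qed.

Lemma tmul_amono a b i j n : (i < m)%N -> (j < m)%N ->
  tmul (coef (amono a i)) (coef (amono b j)) n =
  if n == (i + j)%N then a * sig_pow i b else 0.
Proof.
move=> lt_im lt_jm; rewrite tmul_amonol // coef_amono //.
case: leqP => [le_in|lt_ni]; last by rewrite ifN //; apply/eqP; lia.
have -> : ((n - i)%N == j) = (n == (i + j)%N) by apply/eqP/eqP; lia.
by case: eqP; rewrite ?rmorph0 ?mulr0.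
Qed.

Lemma amul_amono a b i j : (i + j < m)%N ->
  amul (amono a i) (amono b j) = amono (a * sig_pow i b) (i + j).
Proof.
move=> lt_ijm; apply/ffunP => l; rewrite !ffunE reduce_id => [|N le_mN].
  by rewrite tmul_amono //; lia.
by rewrite tmul_amono ?ifN //; [apply/eqP|..]; lia.
Qed.

Lemma amul_amono_wrap a b i j : (i < m)%N -> (j < m)%N -> (i + j)%N = m ->
  amul (amono a i) (amono b j) = aconst (a * sig_pow i b * d).
Proof.
move=> lt_im lt_jm e_ijm; apply/ffunP => l; rewrite !ffunE.
rewrite reduce_top => [|N lt_mN|]; last 2 first.
- by rewrite tmul_amono ?ifN //; apply/eqP; lia.
- lia.
rewrite /Defs.red_step !tmul_amono // subnn e_ijm eqxx (ltn_eqF (ltn_ord l)).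
by rewrite add0r; case: ifP.
Qed.

Lemma amul_aconstr u a : (0 < m)%N -> amul u (aconst a) = [ffun i => u i * sig_pow i a].
Proof.
move=> m_gt0; apply/ffunP => l; rewrite !ffunE reduce_id => [|N le_mN].
  by rewrite tmul_aconstr ?coef_ord.
by rewrite tmul_aconstr // coef_default ?mul0r.
Qed.

Lemma amul_aconstl b u : (0 < m)%N -> amul (aconst b) u = [ffun i => b * u i].
Proof.
move=> m_gt0; apply/ffunP => l; rewrite !ffunE reduce_id => [|N le_mN].
  by rewrite aconst_amono tmul_amonol // subn0 coef_ord.
by rewrite aconst_amono tmul_amonol // subn0 coef_default ?mulr0.
Qed.

Lemma aconst_inj : (0 < m)%N -> injective aconst.
Proof.
move=> m_gt0 a b /(congr1 (fun x : A => x (Ordinal m_gt0))).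
by rewrite !ffunE.
Qed.

Lemma H_id_inj k k' : (0 < m)%N -> norm_one D sigma m k -> norm_one D sigma m k' ->
  H_id k =1 H_id k' -> k = k'.
Proof.
move=> m_gt0 [_ _ Nk] [_ _ Nk'] e.
case: (ltnP 1 m) => [m_gt1|m_le1].
  have := congr1 (fun x => coef x 1) (e (amono 1 1)).
  by rewrite /= !coef_H_id /twist coef_amono // !mul1r !sig_norm1.
have m1 : m = 1%N by lia.
by move: Nk Nk'; rewrite m1 !big_ord1 /= => -> ->.
Qed.

Lemma iter_H_id w j x : sigma w = w ->
  iter j (H_id w) x = [ffun i : 'I_m => x i * w ^+ (i * j)].
Proof.
move=> sw; elim: j => [|j IH]; apply/ffunP => i.
  by rewrite ffunE muln0 mulr1.
by rewrite iterS H_idE IH !ffunE sig_norm_fixed // -mulrA -exprD -mulnSr.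
Qed.

Lemma iter_H_id_id w j : sigma w = w -> w ^+ j = 1 -> iter j (H_id w) =1 id.
Proof.
move=> sw wj x; rewrite iter_H_id //; apply/ffunP => i.
by rewrite ffunE mulnC exprM wj expr1n mulr1.
Qed.

Lemma expr_eq1_iter_H_id w j : (1 < m)%N -> sigma w = w ->
  iter j (H_id w) =1 id -> w ^+ j = 1.
Proof.
move=> m_gt1 sw e; have := congr1 (fun x : A => x (Ordinal m_gt1)) (e (amono 1 1)).
by rewrite /= iter_H_id // !ffunE /= mul1r mul1n.
Qed.

Section ExtensionsOfIdentity.
Hypothesis D_division : division_ring D.
Hypothesis sigma_bij : bijective sigma.
Hypothesis sigma_order : restr_order D sigma m.
Hypothesis d_notin_F0 : ~ inF0 D sigma d.

Variable phi : A -> A.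
Hypothesis phiD : forall x y, phi (x + y) = phi x + phi y.
Hypothesis phiM : forall x y, phi (amul x y) = amul (phi x) (phi y).
Hypothesis phi_inj : injective phi.
Hypothesis phi_ext : extends_idD D m phi.

Let m_gt0 : (0 < m)%N.
Proof. by case: sigma_order. Qed.

Lemma phi0 : phi 0 = 0.
Proof. by apply: (@addrI _ (phi 0)); rewrite -phiD !addr0. Qed.

Lemma phi_amono_sum x : phi x = \sum_(i < m) phi (amono (x i) i).
Proof. by rewrite -{1}(amono_sum x) (big_morph phi phiD phi0). Qed.

Lemma phi_id_small : (m <= 1)%N -> phi =1 id.
Proof.
move=> m_le1 x; rewrite phi_amono_sum -{2}(amono_sum x); apply: eq_bigr => i _.
have -> : (i : nat) = 0%N by have := ltn_ord i; lia.
by rewrite -aconst_amono phi_ext.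
Qed.

Section LargeDegree.
Hypothesis m_gt1 : (1 < m)%N.

Let t : A := amono 1 1.
Let k : D := coef (phi t) 1.
Let i1 : 'I_m := Ordinal m_gt1.

Lemma phi_t_comm (i : 'I_m) a : phi t i * sig_pow i a = sigma a * phi t i.
Proof.
have ta : amul t (aconst a) = amul (aconst (sigma a)) t.
  by rewrite !aconst_amono !amul_amono // mul1r rmorph1 mulr1.
have := congr1 (fun x : A => x i) (congr1 phi ta).
by rewrite /= !phiM !phi_ext amul_aconstr ?amul_aconstl ?m_gt0 // !ffunE.
Qed.

(* A nonzero coefficient of phi t in degree i forces sigma^i = sigma on F,
   which the order of sigma on F rules out unless i = 1. *)
Lemma phi_t_supp (i : 'I_m) : (i : nat) != 1%N -> phi t i = 0.
Proof.
move=> ne_i1; apply/eqP/negP => /negP/D_division u_unit.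
have sig_i_eq c : central c -> sig_pow i c = sigma c.
  move=> cc; apply: (mulIr u_unit).
  by rewrite -phi_t_comm (central_sig_pow sigma_bij _ cc).
have [_ _ sigma_nfix] := sigma_order.
have [i0|i_gt0] := posnP i.
  have [c [cc /eqP[]]] := sigma_nfix 1%N m_gt1.
  by rewrite /= -(sig_i_eq c cc) i0.
have lt_i1m : (0 < i.-1 < m)%N by have := ltn_ord i; lia.
have [c [cc /eqP[]]] := sigma_nfix _ lt_i1m.
by apply: (bij_inj sigma_bij); rewrite -sig_powS prednK // sig_i_eq.
Qed.

Lemma phi_t : phi t = amono k 1.
Proof.
apply/ffunP => i; rewrite ffunE; case: eqP => [e|/eqP ne]; last exact: phi_t_supp.
by rewrite /k -e coef_ord.
Qed.

Lemma k_central : central k.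
Proof.
case: sigma_bij => g _ gK y; rewrite -[y]gK.
by have := phi_t_comm i1 (g y); rewrite /k -(coef_ord _ i1).
Qed.

Lemma k_neq0 : k != 0.
Proof.
apply/eqP => k0; have : phi t = phi 0 by rewrite phi_t k0 amono0 phi0.
move/phi_inj/(congr1 (fun x : A => x i1)); rewrite !ffunE /=.
by move/eqP; rewrite oner_eq0.
Qed.

Lemma phi_amono n a : (n < m)%N -> phi (amono a n) = amono (a * sig_norm k n) n.
Proof.
elim: n a => [|n IH] a lt_nm; first by rewrite sig_norm0 mulr1 -aconst_amono phi_ext.
have -> : amono a n.+1 = amul (amono a n) t by rewrite amul_amono ?addn1 ?rmorph1 ?mulr1.
by rewrite phiM IH ?(ltnW lt_nm) // phi_t amul_amono ?addn1 // sig_normS mulrA.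
Qed.

Lemma k_norm1 : sig_norm k m = 1.
Proof.
have d_unit : d \is a GRing.unit.
  apply: D_division; apply/eqP => d0; apply: d_notin_F0.
  by rewrite d0; split; [exact: central0 | exact: rmorph0].
have lt_m1m : (m.-1 < m)%N by rewrite prednK ?m_gt0.
have m1_1 : (m.-1 + 1)%N = m by rewrite addn1 prednK ?m_gt0.
have tm : amul (amono 1 m.-1) t = aconst d.
  by rewrite amul_amono_wrap // rmorph1 !mul1r.
have := congr1 phi tm; rewrite phi_ext phiM phi_amono // phi_t amul_amono_wrap //.
rewrite mul1r -sig_normS prednK ?m_gt0 // => /(aconst_inj m_gt0).
by rewrite -{2}[d]mul1r => /(mulIr d_unit).
Qed.

Lemma phi_H_id : phi =1 H_id k.
Proof.
move=> x; rewrite phi_amono_sum -(amono_sum (H_id k x)); apply: eq_bigr => i _.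
by rewrite phi_amono // H_idE.
Qed.

End LargeDegree.

Lemma extension_of_id_is_H_id : exists2 k, norm_one D sigma m k & phi =1 H_id k.
Proof.
have [m_gt1|m_le1] := ltnP 1 m.
  exists (coef (phi (amono 1 1)) 1); last exact: phi_H_id.
  by split; [exact: k_central | exact: k_neq0 | exact: k_norm1].
exists 1; first by split; [exact: central1 | exact: oner_neq0 | exact: sig_norm1n].
by move=> x; rewrite phi_id_small // H_id1.
Qed.

End ExtensionsOfIdentity.

End CyclicAlgebra.

Unset Implicit Arguments.

Theorem corollary3p2 (D : unitRingType) (sigma : {rmorphism D -> D}) (m : nat) (d : D) :
  division_ring D -> findim_over_center D ->
  bijective sigma -> restr_order D sigma m -> ~ inF0 D sigma d ->
  (* (i) *)
  (exists Phi : D -> (Alg D m -> Alg D m),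
     [/\ forall k, norm_one D sigma m k ->
           is_F0_aut D sigma m d (Phi k) /\ extends_idD D m (Phi k),
         forall k k', norm_one D sigma m k -> norm_one D sigma m k' ->
           Phi k =1 Phi k' -> k = k',
         forall phi, is_F0_aut D sigma m d phi -> extends_idD D m phi ->
           exists2 k, norm_one D sigma m k & phi =1 Phi k &
         forall k k', norm_one D sigma m k -> norm_one D sigma m k' ->
           Phi (k * k') =1 Phi k \o Phi k']) /\
  (* (ii) *)
  (forall omega : D, inF0 D sigma omega -> m.-primitive_root omega ->
     [/\ is_F0_aut D sigma m d (H_id D sigma m omega),
         iter m (H_id D sigma m omega) =1 id &
         forall j, (0 < j < m)%N -> ~ (iter j (H_id D sigma m omega) =1 id)]).
Proof.
move=> D_division _ sigma_bij sigma_order d_notin_F0.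
have [m_gt0 _ _] := sigma_order.
split.
  exists (H_id D sigma m); split.
  - move=> k [k_central k_neq0 k_norm1]; split; last exact: H_id_extends_idD.
    by apply: H_id_F0_aut => //; apply: D_division.
  - by move=> k k'; apply: H_id_inj.
  - move=> phi [phiD _ phiM /bij_inj phi_inj] phi_ext.
    exact: extension_of_id_is_H_id phiD phiM phi_inj phi_ext.
  - by move=> k k' _ [k'_central _ _]; apply: H_idM.
move=> w [w_central sw] w_prim; have wm := prim_expr_order w_prim.
have w_neq0 : w != 0.
  by apply/eqP => w0; move: wm; rewrite w0 expr0n gtn_eqF // => /esym/eqP; rewrite oner_eq0.
split.
- by apply: H_id_F0_aut; rewrite ?sig_norm_fixed ?wm ?D_division.
- exact: iter_H_id_id.
- move=> j /andP[j_gt0 lt_jm].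
  move/(expr_eq1_iter_H_id (leq_ltn_trans j_gt0 lt_jm) sw)/eqP.
  rewrite -(prim_order_dvd w_prim) => /(dvdn_leq j_gt0).
  by rewrite leqNgt lt_jm.
Qed.
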